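(* In the full subcategory $\mathbf{Sys}_0(L)$ of $\mathbf{Sys}(L)$ consisting of $T_0$ affine systems, a morphism $(f,\varphi):(X_1,\kappa_1,A_1)\to(X_2,\kappa_2,A_2)$ is a monomorphism if and only if $f$ is injective and $\varphi:A_2\to A_1$ is an epimorphism in $\mathbf{A}$.
   Context: Fix a variety $\mathbf{A}$ of algebras (full subcategory of the category of $\Omega$-algebras and homomorphisms closed under products, subalgebras and homomorphic images) in which every algebra is non-empty (standing assumptions also include set-indexed coproducts and a free algebra over a singleton). Fix an $\mathbf{A}$-algebra $L$ with more than one element; $L^X$ is the power algebra. An affine system is $(X,\kappa,A)$ with $X$ a set, $A$ an algebra, $\kappa:A\to L^X$ a homomorphism; a morphism $(f,\varphi):(X_1,\kappa_1,A_1)\to(X_2,\kappa_2,A_2)$ is a map $f:X_1\to X_2$ with a homomorphism $\varphi:A_2\to A_1$ such that $\kappa_1(\varphi(a))(x)=\kappa_2(a)(f(x))$ for all $a\in A_2,x\in X_1$; composition $(g,\psi)\circ(f,\varphi)=(g\circ f,\varphi\circ\psi)$; this is $\mathbf{Sys}(L)$. A system is $T_0$ if for all $x,y\in X$, $\kappa(a)(x)=\kappa(a)(y)$ for all $a\in A$ implies $x=y$. *)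

Set Implicit Arguments.
Unset Strict Implicit.

Record signature := Signature { op : Type; arity : op -> Type }.
Arguments arity : clear implicits.

Section Algebras.
Variable S : signature.

Record algebra := Algebra {
  carrier :> Type;
  ops : forall o : op S, (arity S o -> carrier) -> carrier }.
Arguments ops : clear implicits.

Definition is_hom (A B : algebra) (f : A -> B) : Prop :=
  forall (o : op S) (args : arity S o -> A),
    f (ops A o args) = ops B o (fun i => f (args i)).

Definition prod_alg (I : Type) (F : I -> algebra) : algebra :=
  @Algebra (forall i : I, F i)
    (fun o args => fun i => ops (F i) o (fun k => args k i)).

Definition pow_alg (L : algebra) (X : Type) : algebra :=
  @prod_alg X (fun _ => L).

Definition op_closed (A : algebra) (P : A -> Prop) : Prop :=
  forall (o : op S) (args : arity S o -> A),
    (forall i, P (args i)) -> P (ops A o args).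

Definition sub_alg (A : algebra) (P : A -> Prop) (HP : op_closed P) : algebra :=
  @Algebra {x : A | P x}
    (fun o args => exist P (ops A o (fun i => proj1_sig (args i)))
                     (HP o _ (fun i => proj2_sig (args i)))).

Definition alg_class := algebra -> Prop.

(** Variety (HSP-closed class) all of whose members are non-empty.
    Since all members are non-empty, closure under subalgebras is
    closure under non-empty subalgebras. *)
Definition variety (V : alg_class) : Prop :=
  (forall (I : Type) (F : I -> algebra), (forall i, V (F i)) -> V (prod_alg F)) /\
  (forall (A : algebra) (P : A -> Prop) (HP : op_closed P),
      V A -> (exists x, P x) -> V (sub_alg HP)) /\
  (forall (A B : algebra) (f : A -> B),
      V A -> is_hom f -> (forall b, exists a, f a = b) -> V B) /\
  (forall A : algebra, V A -> inhabited A).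

Definition has_coproducts (V : alg_class) : Prop :=
  forall (I : Type) (F : I -> algebra), (forall i, V (F i)) ->
    exists (C : algebra) (inj : forall i, F i -> C),
      V C /\ (forall i, is_hom (inj i)) /\
      forall B : algebra, V B ->
        forall g : forall i, F i -> B, (forall i, is_hom (g i)) ->
          exists h : C -> B,
            is_hom h /\ (forall i x, h (inj i x) = g i x) /\
            forall h' : C -> B, is_hom h' -> (forall i x, h' (inj i x) = g i x) ->
              forall c, h' c = h c.

Definition has_free_singleton (V : alg_class) : Prop :=
  exists (F : algebra) (u : F),
    V F /\
    forall B : algebra, V B -> forall b : B,
      exists h : F -> B, is_hom h /\ h u = b /\
        forall h' : F -> B, is_hom h' -> h' u = b -> forall x, h' x = h x.

Definition is_epi (V : alg_class) (A B : algebra) (phi : A -> B) : Prop :=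
  forall C : algebra, V C -> forall g h : B -> C, is_hom g -> is_hom h ->
    (forall a, g (phi a) = h (phi a)) -> forall b, g b = h b.

End Algebras.

Section Systems.
Variable S : signature.
Variable L : algebra S.

Record affine_system := AffineSystem {
  sX : Type;
  sA : algebra S;
  skappa : sA -> pow_alg L sX;
  skappa_hom : is_hom skappa }.
Arguments skappa : clear implicits.

Definition in_Sys (V : alg_class S) (s : affine_system) : Prop := V (sA s).

Definition is_T0 (s : affine_system) : Prop :=
  forall x y : sX s, (forall a : sA s, skappa s a x = skappa s a y) -> x = y.

Record sys_morphism (s1 s2 : affine_system) := SysMorphism {
  mf : sX s1 -> sX s2;
  mphi : sA s2 -> sA s1;
  mphi_hom : is_hom mphi;
  mcompat : forall (a : sA s2) (x : sX s1),
      skappa s1 (mphi a) x = skappa s2 a (mf x) }.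
Arguments mf {s1 s2}.
Arguments mphi {s1 s2}.

Definition mor_eq (s1 s2 : affine_system) (m n : sys_morphism s1 s2) : Prop :=
  (forall x, mf m x = mf n x) /\ (forall a, mphi m a = mphi n a).

(** Composition (g,psi) o (f,phi) = (g o f, phi o psi); we only need its
    underlying components. *)
Definition comp_f (s1 s2 s3 : affine_system)
  (n : sys_morphism s2 s3) (m : sys_morphism s1 s2) : sX s1 -> sX s3 :=
  fun x => mf n (mf m x).
Definition comp_phi (s1 s2 s3 : affine_system)
  (n : sys_morphism s2 s3) (m : sys_morphism s1 s2) : sA s3 -> sA s1 :=
  fun a => mphi m (mphi n a).

Definition is_mono_Sys0 (V : alg_class S) (s1 s2 : affine_system)
  (m : sys_morphism s1 s2) : Prop :=
  forall z : affine_system, in_Sys V z -> is_T0 z ->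
    forall g h : sys_morphism z s1,
      (forall x, comp_f m g x = comp_f m h x) ->
      (forall a, comp_phi m g a = comp_phi m h a) ->
      mor_eq g h.

End Systems.

From Stdlib Require Import FunctionalExtensionality.

(* Two kinds of T0 test objects suffice.  A point x of a system s is a
   morphism from the one-point system (1, id, L) into s, so a monomorphism
   must be injective on points; and any homomorphism g : A -> C is a
   morphism into s from the system with empty point set over C, on which
   the T0 condition and the compatibility condition are vacuous, so a
   monomorphism must have an epimorphic algebra component.  Conversely,
   cancellation is checked componentwise. *)

Section TestSystems.
Context {S : signature} {L : algebra S}.

Definition point_system : affine_system L :=
  @AffineSystem S L unit L (fun l _ => l) (fun o args => eq_refl).

Lemma point_system_T0 : is_T0 point_system.
Proof. intros [] [] _; reflexivity. Qed.

Lemma eval_hom (s : affine_system L) (x : sX s) :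
  is_hom (fun a : sA s => @skappa _ _ s a x).
Proof. intros o args; rewrite (@skappa_hom _ _ s); reflexivity. Qed.

Definition point_morphism (s : affine_system L) (x : sX s) :
  sys_morphism point_system s :=
  @SysMorphism S L point_system s (fun _ => x) (fun a => @skappa _ _ s a x)
    (eval_hom s x) (fun a u => eq_refl).

Lemma empty_kappa_hom (C : algebra S) :
  is_hom (B := pow_alg L Empty_set) (fun (_ : C) (e : Empty_set) => match e with end).
Proof. intros o args; apply functional_extensionality_dep; intros []. Qed.

Definition empty_system (C : algebra S) : affine_system L :=
  @AffineSystem S L Empty_set C _ (empty_kappa_hom C).

Lemma empty_system_T0 (C : algebra S) : is_T0 (empty_system C).
Proof. intros []. Qed.

Definition empty_morphism {s : affine_system L} {C : algebra S}
  {g : sA s -> C} (g_hom : is_hom g) : sys_morphism (empty_system C) s :=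
  @SysMorphism S L (empty_system C) s (fun e => match e with end) g g_hom
    (fun a e => match e with end).

Section Monomorphisms.
Context {V : alg_class S} {s1 s2 : affine_system L} (m : sys_morphism s1 s2).

Lemma mono_Sys0_inj :
  V L -> is_mono_Sys0 V m -> forall x y : sX s1, mf m x = mf m y -> x = y.
Proof.
  intros VL m_mono x y mxy.
  assert (Hcomp_phi : forall a,
    comp_phi m (point_morphism s1 x) a = comp_phi m (point_morphism s1 y) a).
  { intros a; unfold comp_phi; simpl; rewrite !(mcompat m), mxy; reflexivity. }
  destruct (m_mono point_system VL point_system_T0
              (point_morphism s1 x) (point_morphism s1 y)
              (fun _ => mxy) Hcomp_phi) as [Hf _].
  exact (Hf tt).
Qed.

Lemma mono_Sys0_epi : is_mono_Sys0 V m -> is_epi V (mphi m).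
Proof.
  intros m_mono C VC g h g_hom h_hom gh b.
  destruct (m_mono (empty_system C) VC (empty_system_T0 C)
              (empty_morphism g_hom) (empty_morphism h_hom)
              (fun e => match e with end) gh) as [_ Hphi].
  exact (Hphi b).
Qed.

Lemma inj_epi_mono_Sys0 :
  (forall x y : sX s1, mf m x = mf m y -> x = y) -> is_epi V (mphi m) ->
  is_mono_Sys0 V m.
Proof.
  intros m_inj m_epi z Vz _ g h Hf Hphi; split.
  - intros x; apply m_inj, Hf.
  - exact (m_epi (sA z) Vz (mphi g) (mphi h) (mphi_hom g) (mphi_hom h) Hphi).
Qed.

End Monomorphisms.
End TestSystems.

Theorem proposition11 :
  forall (S : signature) (V : alg_class S),
    variety V -> has_coproducts V -> has_free_singleton V ->
  forall (L : algebra S), V L -> (exists l1 l2 : L, l1 <> l2) ->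
  forall (s1 s2 : affine_system L),
    in_Sys V s1 -> is_T0 s1 -> in_Sys V s2 -> is_T0 s2 ->
  forall m : sys_morphism s1 s2,
    is_mono_Sys0 V m <->
    ((forall x y : sX s1, mf m x = mf m y -> x = y) /\ is_epi V (mphi m)).
Proof.
  intros S V _ _ _ L VL _ s1 s2 _ _ _ _ m; split.
  - intros m_mono; split.
    + exact (mono_Sys0_inj m VL m_mono).
    + exact (mono_Sys0_epi m m_mono).
  - intros [m_inj m_epi]; exact (inj_epi_mono_Sys0 m m_inj m_epi).
Qed.
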